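(* Let $R$ be a commutative ring, $n$ a positive integer and $J$ a weakly $n$-absorbing ideal of $R$. (1) If $I$ is an ideal of $R$ with $I\subseteq J$, then $J/I$ is a weakly $n$-absorbing ideal of $R/I$. (2) If $T$ is a subring of $R$, then $J\cap T$ is a weakly $n$-absorbing ideal of $T$. (3) If $S$ is a multiplicatively closed subset of $R$ with $J\cap S=\emptyset$, then $J_S$ is a weakly $n$-absorbing ideal of $R_S$.
   Context: All rings are commutative with $1\neq0$ (subrings share the identity). A proper ideal $J$ of $R$ is weakly $n$-absorbing if whenever $0\neq a_1\cdots a_{n+1}\in J$ with $a_1,\dots,a_{n+1}\in R$, there are $n$ of the $a_i$'s whose product is in $J$. $R_S$ and $J_S$ denote localizations at $S$. *)

From HB Require Import structures.
From mathcomp Require Import all_boot all_order all_algebra.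
Set Implicit Arguments. Unset Strict Implicit. Unset Printing Implicit Defensive.
Import GRing.Theory.
Local Open Scope ring_scope.

Definition is_ideal (R : comNzRingType) (J : R -> Prop) : Prop :=
  [/\ J 0,
      (forall x y, J x -> J y -> J (x + y)) &
      (forall r x, J x -> J (r * x))].

Definition proper_ideal (R : comNzRingType) (J : R -> Prop) : Prop :=
  is_ideal J /\ ~ J 1.

Definition weakly_n_absorbing (R : comNzRingType) (n : nat) (J : R -> Prop)
  : Prop :=
  proper_ideal J /\
  forall a : 'I_n.+1 -> R,
    \prod_(i < n.+1) a i != 0 -> J (\prod_(i < n.+1) a i) ->
    exists i : 'I_n.+1, J (\prod_(j < n.+1 | j != i) a j).

(* f : R -> Q presents Q as the quotient ring R/I (surjective ring morphism
   with kernel exactly I). *)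
Definition is_quotient_map (R Q : comNzRingType) (I : R -> Prop)
  (f : {rmorphism R -> Q}) : Prop :=
  (forall z : Q, exists x : R, f x = z) /\ (forall x : R, f x = 0 <-> I x).

(* Image of a subset under a map: for the quotient map this is J/I. *)
Definition image_set (R Q : Type) (f : R -> Q) (J : R -> Prop) : Q -> Prop :=
  fun z => exists2 x, J x & f x = z.

Definition mult_closed (R : comNzRingType) (S : R -> Prop) : Prop :=
  S 1 /\ (forall x y, S x -> S y -> S (x * y)).

(* f : R -> RS presents RS as the localization R_S (the usual universal
   characterization, as in Mathlib's IsLocalization). *)
Definition is_localization (R RS : comNzRingType) (S : R -> Prop)
  (f : {rmorphism R -> RS}) : Prop :=
  [/\ (forall s, S s -> exists u : RS, f s * u = 1),
      (forall z : RS, exists r s, S s /\ z * f s = f r) &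
      (forall x y, f x = f y <-> exists2 c, S c & c * x = c * y)].

Definition loc_ideal (R RS : comNzRingType) (S : R -> Prop)
  (f : {rmorphism R -> RS}) (J : R -> Prop) : RS -> Prop :=
  fun z => exists j s, [/\ J j, S s & z * f s = f j].

(** Products commute with ring morphisms, so weak n-absorption transfers along
    a morphism once membership and nonvanishing of products do. For [R -> R/I]
    the kernel [I] lies in [J], so [J] is the full preimage of [J/I] and the
    factors can be lifted. For a subring, injectivity keeps nonzero products
    nonzero. For a localization, write [b_i = f a_i / f v_i] with [v_i] in [S];
    if the product of the [b_i] lies in [J_S] then [u * prod a_i] lies in [J]
    for some [u] in [S], and replacing [(a_i, v_i)] by [(u a_i, u v_i)] puts the
    product of the numerators in [J]. Elements of [S] become units, so that
    product is nonzero, and the [n] numerators whose product lies in [J] give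
    [n] of the [b_i] whose product lies in [J_S]. *)

From HB Require Import structures.
From mathcomp Require Import all_boot all_order all_algebra.
From mathcomp Require Import ring.
Set Implicit Arguments.
Unset Strict Implicit.
Local Open Scope ring_scope.
Import GRing.Theory.

Section IdealTheory.

Variables (R : comNzRingType) (J : R -> Prop).
Hypothesis J_ideal : is_ideal J.

Lemma ideal0 : J 0.
Proof. by case: J_ideal. Qed.

Lemma idealD x y : J x -> J y -> J (x + y).
Proof. by case: J_ideal => _ JD _; apply: JD. Qed.

Lemma idealMl r x : J x -> J (r * x).
Proof. by case: J_ideal => _ _ JM; apply: JM. Qed.

Lemma idealMr r x : J x -> J (x * r).
Proof. by rewrite mulrC; apply: idealMl. Qed.

End IdealTheory.

Section Preimage.

Variables (T R : comNzRingType) (g : {rmorphism T -> R}) (J : R -> Prop).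

Lemma preimage_ideal : is_ideal J -> is_ideal (fun t => J (g t)).
Proof.
move=> J_ideal; split=> [|x y|r x]; rewrite ?rmorph0 ?rmorphD ?rmorphM.
- exact: ideal0.
- exact: idealD.
- exact: idealMl.
Qed.

Lemma preimage_proper_ideal : proper_ideal J -> proper_ideal (fun t => J (g t)).
Proof. by case=> J_ideal J1; split; [apply: preimage_ideal | rewrite rmorph1]. Qed.

Lemma weakly_n_absorbing_preimage n :
  injective g -> weakly_n_absorbing n J -> weakly_n_absorbing n (fun t => J (g t)).
Proof.
move=> g_inj [J_proper J_abs]; split; first exact: preimage_proper_ideal.
move=> a prod_neq0; rewrite rmorph_prod => Jprod.
have gprod_neq0 : \prod_(i < n.+1) g (a i) != 0.
  rewrite -rmorph_prod; apply: contraNneq prod_neq0 => e.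
  by apply/eqP/g_inj; rewrite e rmorph0.
have [i Ji] := J_abs _ gprod_neq0 Jprod.
by exists i; rewrite rmorph_prod.
Qed.

End Preimage.

Section Image.

Variables (R Q : comNzRingType) (f : {rmorphism R -> Q}) (J : R -> Prop).
Hypotheses (J_ideal : is_ideal J) (f_surj : forall z, exists x, f x = z).
Hypothesis ker_sub : forall x, f x = 0 -> J x.

Lemma image_set_ideal : is_ideal (image_set f J).
Proof.
split.
- by exists 0; [apply: ideal0 | rewrite rmorph0].
- move=> _ _ [x Jx <-] [y Jy <-].
  by exists (x + y); [apply: idealD | rewrite rmorphD].
- move=> z _ [x Jx <-]; have [r <-] := f_surj z.
  by exists (r * x); [apply: idealMl | rewrite rmorphM].
Qed.

Lemma image_setK x : image_set f J (f x) <-> J x.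
Proof.
split=> [[y Jy fyx]|Jx]; last by exists x.
have Jxy : J (x - y) by apply: ker_sub; rewrite rmorphB fyx subrr.
by rewrite -(subrK y x); apply: idealD.
Qed.

Lemma image_set_proper_ideal : ~ J 1 -> proper_ideal (image_set f J).
Proof.
by move=> J1; split; [apply: image_set_ideal | rewrite -(rmorph1 f) image_setK].
Qed.

Lemma weakly_n_absorbing_image n :
  weakly_n_absorbing n J -> weakly_n_absorbing n (image_set f J).
Proof.
move=> [[_ J1] J_abs]; split; first exact: image_set_proper_ideal.
move=> b prod_neq0 Jprod.
have [a fa] := fin_all_exists (fun i => f_surj (b i)).
have prod_lift (P : pred 'I_n.+1) :
    \prod_(i < n.+1 | P i) b i = f (\prod_(i < n.+1 | P i) a i).
  by rewrite rmorph_prod; apply: eq_bigr => i _; rewrite fa.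
rewrite (prod_lift xpredT) in prod_neq0 Jprod.
have aprod_neq0 : \prod_(i < n.+1) a i != 0.
  by apply: contraNneq prod_neq0 => ->; rewrite rmorph0.
have [i Ji] := J_abs a aprod_neq0 ((image_setK _).1 Jprod).
by exists i; rewrite prod_lift image_setK.
Qed.

End Image.

Lemma rmorph_fraction_prod (R RS : comNzRingType) (f : {rmorphism R -> RS})
    (I : Type) (r : seq I) (P : pred I) (a v : I -> R) (b : I -> RS) :
  (forall i, b i * f (v i) = f (a i)) ->
  (\prod_(i <- r | P i) b i) * f (\prod_(i <- r | P i) v i)
    = f (\prod_(i <- r | P i) a i).
Proof.
by move=> bva; rewrite !rmorph_prod -big_split; apply: eq_bigr => i _; apply: bva.
Qed.

Section Localization.

Variables (R RS : comNzRingType) (S : R -> Prop) (f : {rmorphism R -> RS}).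
Hypotheses (S_mult : mult_closed S) (f_loc : is_localization S f).

Lemma mult_closedM x y : S x -> S y -> S (x * y).
Proof. by case: S_mult => _; apply. Qed.

Lemma mult_closed_prod (I : Type) (r : seq I) (P : pred I) (F : I -> R) :
  (forall i, S (F i)) -> S (\prod_(i <- r | P i) F i).
Proof. by case: S_mult => S1 _ SF; apply: big_ind => //; apply: mult_closedM. Qed.

Lemma loc_mulf_eq0 s y : S s -> f s * y = 0 -> y = 0.
Proof.
case: f_loc => f_unit _ _ Ss fsy0; have [u fsu] := f_unit s Ss.
by rewrite -[y]mul1r -fsu mulrAC fsy0 mul0r.
Qed.

Variable J : R -> Prop.
Hypothesis J_ideal : is_ideal J.

Lemma loc_ideal_ideal : is_ideal (loc_ideal S f J).
Proof.
case: f_loc => _ f_frac _; split.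
- exists 0, 1; rewrite !rmorph0 mul0r; split=> //; first exact: ideal0.
  by case: S_mult.
- move=> z1 z2 [j1 [s1 [Jj1 Ss1 e1]]] [j2 [s2 [Jj2 Ss2 e2]]].
  exists (j1 * s2 + j2 * s1), (s1 * s2); split.
  + by apply: (idealD J_ideal); apply: (idealMr J_ideal).
  + exact: mult_closedM.
  + by rewrite rmorphD !rmorphM -e1 -e2; ring.
- move=> r z [j [s [Jj Ss e]]]; have [r' [s' [Ss' e']]] := f_frac r.
  exists (r' * j), (s' * s); split; [exact: idealMl | exact: mult_closedM |].
  by rewrite !rmorphM -e' -e; ring.
Qed.

Lemma loc_idealP x : loc_ideal S f J (f x) -> exists2 u, S u & J (u * x).
Proof.
case=> j [s [Jj Ss e]]; case: f_loc => _ _ f_eq.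
have : f (x * s) = f j by rewrite rmorphM.
case/f_eq => c Sc cxs.
exists (c * s); first exact: mult_closedM.
by rewrite mulrAC -mulrA cxs; apply: idealMl.
Qed.

Lemma loc_ideal_proper_ideal :
  (forall x, ~ (J x /\ S x)) -> proper_ideal (loc_ideal S f J).
Proof.
move=> JS_disj; split; first exact: loc_ideal_ideal.
rewrite -(rmorph1 f) => /loc_idealP [u Su]; rewrite mulr1 => Ju.
exact: JS_disj (conj Ju Su).
Qed.

Lemma weakly_n_absorbing_loc n :
  (forall x, ~ (J x /\ S x)) -> weakly_n_absorbing n J ->
  weakly_n_absorbing n (loc_ideal S f J).
Proof.
move=> JS_disj [_ J_abs]; split; first exact: loc_ideal_proper_ideal.
move=> b prod_neq0 Jprod; case: f_loc => _ f_frac _.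
have [r /fin_all_exists [v frac]] := fin_all_exists (fun i => f_frac (b i)).
have [u Su Jur] : exists2 u, S u & J (u * \prod_i r i).
  apply: loc_idealP; rewrite -(rmorph_fraction_prod _ _ (fun i => (frac i).2)).
  exact: idealMr loc_ideal_ideal _ _ Jprod.
pose a i := u * r i; pose w i := u * v i.
have Sw i : S (w i) by apply: mult_closedM => //; case: (frac i).
have frac_aw i : b i * f (w i) = f (a i).
  by rewrite !rmorphM mulrCA (frac i).2.
have Ja : J (\prod_i a i).
  by rewrite /a big_split /= big_ord_recl -mulrA mulrCA; apply: idealMl.
have aprod_neq0 : \prod_i a i != 0.
  apply: contraNneq prod_neq0 => a0.
  have Swprod : S (\prod_i w i) by apply: mult_closed_prod.
  apply/eqP/(loc_mulf_eq0 Swprod).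
  by rewrite mulrC (rmorph_fraction_prod _ _ frac_aw) a0 rmorph0.
have [i Ji] := J_abs a aprod_neq0 Ja.
exists i, (\prod_(j < n.+1 | j != i) a j), (\prod_(j < n.+1 | j != i) w j).
by split=> //; [apply: mult_closed_prod | apply: rmorph_fraction_prod].
Qed.

End Localization.

Theorem mainTheorem13 (R : comNzRingType) (n : nat) (J : R -> Prop) :
  (0 < n)%N -> weakly_n_absorbing n J ->
  (* (1) quotients *)
  (forall (I : R -> Prop) (Q : comNzRingType) (f : {rmorphism R -> Q}),
      is_ideal I -> (forall x, I x -> J x) -> is_quotient_map I f ->
      weakly_n_absorbing n (image_set f J)) /\
  (* (2) subrings (T embedded in R by an injective unital ring morphism g) *)
  (forall (T : comNzRingType) (g : {rmorphism T -> R}),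
      injective g ->
      weakly_n_absorbing n (fun t : T => J (g t))) /\
  (* (3) localizations *)
  (forall (S : R -> Prop) (RS : comNzRingType) (f : {rmorphism R -> RS}),
      mult_closed S -> (forall x, ~ (J x /\ S x)) -> is_localization S f ->
      weakly_n_absorbing n (loc_ideal S f J)).
Proof.
move=> _ J_abs; have J_ideal : is_ideal J by case: J_abs => [[]].
split; [|split].
- move=> I Q f _ IJ [f_surj f_ker].
  apply: weakly_n_absorbing_image J_abs => // x /f_ker; exact: IJ.
- by move=> T g g_inj; apply: weakly_n_absorbing_preimage.
- by move=> S RS f S_mult JS_disj f_loc; apply: weakly_n_absorbing_loc.
Qed.
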